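(* Let $K$ be a field of characteristic $p>0$. Then $\{\partial^{[\alpha]}\mid\alpha\in\mathbb{N}^n\}$ is the only iterative $(-\mathrm{ad}(x_1),\ldots,-\mathrm{ad}(x_n))$-descent in $\mathcal{D}(P_n)$ indexed by $\mathbb{N}^n$.
   Context: $P_n=K[x_1,\ldots,x_n]$, $\partial_i^{[k]}=\partial_i^k/k!$ acting on $P_n$ by $\partial_i^{[k]}(x^m)=\binom{m_i}{k}x^{m-ke_i}$, $\partial^{[\alpha]}=\prod_i\partial_i^{[\alpha_i]}$; $\mathcal{D}(P_n)=\bigoplus_\alpha P_n\partial^{[\alpha]}\subseteq\mathrm{End}_K(P_n)$ is the ring of differential operators; $\mathrm{ad}(a)(b)=ab-ba$. For commuting derivations $\delta=(\delta_1,\ldots,\delta_n)$ of a ring $A$, a family $\{y^{[\alpha]}\mid\alpha\in\mathbb{N}^n\}$ is an iterative $\delta$-descent if $y^{[0]}=1$, $y^{[\alpha]}y^{[\beta]}=\binom{\alpha+\beta}{\beta}y^{[\alpha+\beta]}$ (multi-binomial coefficient $\prod_i\binom{\alpha_i+\beta_i}{\beta_i}$ taken in $\mathbb{F}_p$) and $\delta_1^{\alpha_1}\cdots\delta_n^{\alpha_n}(y^{[\beta]})=y^{[\beta-\alpha]}$ for all $\alpha,\beta\in\mathbb{N}^n$, with $y^{[\gamma]}=0$ for $\gamma\notin\mathbb{N}^n$. *)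

From HB Require Import structures.
From mathcomp Require Import all_boot all_order all_algebra.
From mathcomp Require Export mpoly.
Set Implicit Arguments. Unset Strict Implicit. Unset Printing Implicit Defensive.
Import Order.TTheory GRing.Theory.
Local Open Scope ring_scope.

Section DiffOps.
Variables (K : fieldType) (n : nat).

Notation P := {mpoly K[n]}.

(* K-endomorphisms of P_n are represented as functions P -> P
   (linearity is implied by membership in D(P_n) below). *)
Definition op := P -> P.

Definition opmul (a b : op) : op := fun q => a (b q).
Definition opid : op := fun q => q.

Definition opmulpoly (f : P) : op := fun q => f * q.

Definition dpow (a : 'X_{1..n}) : op := fun q =>
  \sum_(m <- msupp q)
     (q@_m * (\prod_(i < n) 'C(m i, a i))%:R) *: 'X_[(m - a)%MM].

Definition mbinom (a b : 'X_{1..n}) : K :=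
  (\prod_(i < n) 'C((a + b)%MM i, b i))%:R.

Definition is_diffop (T : op) : Prop :=
  exists s : seq ('X_{1..n} * P),
    forall q, T q = \sum_(c <- s) c.2 * dpow c.1 q.

(* the derivation  -ad(x_i) : b |-> b x_i - x_i b *)
Definition mad (i : 'I_n) (b : op) : op :=
  fun q => b ('X_i * q) - 'X_i * b q.

Definition mads (a : 'X_{1..n}) (b : op) : op :=
  foldr (fun i c => iter (a i) (mad i) c) b (enum 'I_n).

Definition iterative_descent (y : 'X_{1..n} -> op) : Prop :=
  [/\ forall a, is_diffop (y a),
      forall q, y 0%MM q = q,
      forall a b q, opmul (y a) (y b) q = mbinom a b *: y (a + b)%MM q &
      forall a b q, mads a (y b) q =
                    if (a <= b)%MM then y (b - a)%MM q else 0].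

End DiffOps.

From mathcomp Require Import all_boot all_order all_algebra.
From mathcomp Require Import ssrcomplements mpoly zify ring.
From Stdlib Require Import FunctionalExtensionality.
Set Implicit Arguments. Unset Strict Implicit. Unset Printing Implicit Defensive.
Import GRing.Theory.
Local Open Scope ring_scope.

(* The divided powers satisfy the descent identities by direct computation on
   monomials, using [-ad(x_i)](d^[b]) = d^[b - e_i] (Pascal's rule).
   Conversely, let y be any descent and argue by induction on |b|.  By
   induction [-ad(x_i)](y_b - d^[b]) = y_(b-e_i) - d^[b-e_i] = 0, so y_b - d^[b]
   commutes with every x_i and hence is the multiplication by f := y_b(1).  In
   characteristic p the composition law makes y_b^p a multiple of
   binom(pb, b) y_(pb) = 0, whereas for f <> 0 the p-th iterate of
   q |-> d^[b] q + q f sends 1 to f^p plus terms of lower degree, since d^[b]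
   lowers degrees; thus f = 0. *)

Section LinearOperators.
Variables (K : fieldType) (n : nat).
Notation P := {mpoly K[n]}.
Implicit Types (T : P -> P) (f q : P).

Lemma linear_op0 T : linear T -> T 0 = 0.
Proof. by move=> lT; have := lT (-1) 0 0; rewrite scaler0 addr0 scaleN1r addNr. Qed.

Lemma linear_opD T : linear T -> forall q1 q2, T (q1 + q2) = T q1 + T q2.
Proof. by move=> lT q1 q2; have := lT 1 q1 q2; rewrite !scale1r. Qed.

Lemma linear_opZ T : linear T -> forall c q, T (c *: q) = c *: T q.
Proof. by move=> lT c q; have := lT c q 0; rewrite (linear_op0 lT) !addr0. Qed.

Lemma linear_op_mpolyE T : linear T ->
  forall q, T q = \sum_(m <- msupp q) q@_m *: T 'X_[m].
Proof.
move=> lT q; rewrite {1}(mpolyE q).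
elim: (msupp q) => [|m s IH]; first by rewrite !big_nil linear_op0.
by rewrite !big_cons linear_opD // linear_opZ // IH.
Qed.

Lemma eq_linear_op T1 T2 : linear T1 -> linear T2 ->
  (forall m, T1 'X_[m] = T2 'X_[m]) -> T1 =1 T2.
Proof.
move=> lT1 lT2 eT q; rewrite (linear_op_mpolyE lT1) (linear_op_mpolyE lT2).
by apply: eq_bigr => m _; rewrite eT.
Qed.

Lemma linear_op_id : linear (fun q : P => q).
Proof. by []. Qed.

Lemma linear_op_zero : linear (fun _ : P => 0 : P).
Proof. by move=> c q1 q2; rewrite scaler0 addr0. Qed.

Lemma linear_op_comp T1 T2 : linear T1 -> linear T2 -> linear (fun q => T1 (T2 q)).
Proof. by move=> lT1 lT2 c q1 q2 /=; rewrite lT2 lT1. Qed.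

Lemma linear_op_scale c T : linear T -> linear (fun q => c *: T q).
Proof. by move=> lT d q1 q2 /=; rewrite lT scalerDr !scalerA mulrC. Qed.

Lemma linear_op_sub T1 T2 : linear T1 -> linear T2 -> linear (fun q => T1 q - T2 q).
Proof. by move=> lT1 lT2 d q1 q2 /=; rewrite lT1 lT2 scalerBr opprD addrACA. Qed.

Lemma linear_op_mull f T : linear T -> linear (fun q => f * T q).
Proof. by move=> lT d q1 q2 /=; rewrite lT mulrDr scalerAr. Qed.

Lemma linear_op_mulr_arg f T : linear T -> linear (fun q => T (f * q)).
Proof. by move=> lT d q1 q2 /=; rewrite mulrDr -scalerAr lT. Qed.

Definition mlinext (G : 'X_{1..n} -> P) q := \sum_(m <- msupp q) q@_m *: G m.

Lemma mlinextE G q k : (msize q <= k)%N ->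
  mlinext G q = \sum_(m : 'X_{1..n < k}) q@_m *: G m.
Proof.
pose I : subFinType _ := 'X_{1..n < k}.
move=> le_qk; rewrite /mlinext (big_mksub I) //=; first last.
- by move=> m /msize_mdeg_lt /leq_trans; apply.
- exact: msupp_uniq.
by rewrite big_rmcond //= => m /memN_msupp_eq0 ->; rewrite scale0r.
Qed.

Lemma linear_mlinext G : linear (mlinext G).
Proof.
move=> c q1 q2; set k := maxn (msize (c *: q1 + q2)) (maxn (msize q1) (msize q2)).
rewrite !(@mlinextE _ _ k) ?leq_maxl // ?leq_max ?leqnn ?orbT //.
rewrite scaler_sumr -big_split /=; apply: eq_bigr => m _.
by rewrite mcoeffD mcoeffZ scalerDl scalerA.
Qed.

Lemma mlinextX G m : mlinext G 'X_[m] = G m.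
Proof. by rewrite /mlinext msuppX big_seq1 mcoeffX eqxx scale1r. Qed.

Lemma mnm_neq0_exists (m : 'X_{1..n}) : m != 0%MM -> exists i, m i != 0%N.
Proof.
move=> m_neq0; apply/existsP; apply: contraR m_neq0 => /existsPn m0.
by apply/eqP/mnmP => i; rewrite mnm0E; apply/eqP/negbNE.
Qed.

(* An operator commuting with all the x_i commutes with every monomial, so it
   is K[x]-linear. *)
Lemma linear_op_commX_mulr T : linear T ->
  (forall (i : 'I_n) q, T ('X_i * q) = 'X_i * T q) -> forall q, T q = q * T 1.
Proof.
move=> lT commX.
have commXm k m : (mdeg m <= k)%N -> forall q, T ('X_[m] * q) = 'X_[m] * T q.
  elim: k m => [|k IH] m le_mk q.
    by move: le_mk; rewrite leqn0 mdeg_eq0 => /eqP ->; rewrite mpolyX0 !mul1r.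
  have [->|/mnm_neq0_exists [i mi_neq0]] := eqVneq m 0%MM.
    by rewrite mpolyX0 !mul1r.
  have em : m = (U_(i) + (m - U_(i)))%MM by rewrite addmC submK // lep1mP.
  have le_k : (mdeg (m - U_(i)) <= k)%N.
    by move: le_mk; rewrite {1}em mdegD mdeg1 add1n ltnS.
  by rewrite em mpolyXD -!mulrA commX IH.
move=> q; rewrite (linear_op_mpolyE lT) {3}(mpolyE q) mulr_suml.
apply: eq_bigr => m _.
by rewrite -(mulr1 'X_[m]) (commXm _ _ (leqnn _)) mulr1 scalerAl.
Qed.

End LinearOperators.

Section DividedPowers.
Variables (K : fieldType) (n : nat).
Notation P := {mpoly K[n]}.
Notation M := 'X_{1..n}.
Implicit Types (a b c m : M) (f q : P).

Definition mbin a m := (\prod_(i < n) 'C(m i, a i))%N.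

Lemma mbin_eq0 a m : ~~ (a <= m)%MM -> mbin a m = 0%N.
Proof.
move=> /mnm_lepP nle_am.
have [i lt_mi_ai] : exists i, (m i < a i)%N.
  apply/existsP; apply: contra_notT nle_am => /existsPn le_am i.
  by rewrite leqNgt le_am.
by rewrite /mbin (bigD1 i) //= bin_small.
Qed.

Lemma dpowE a : @dpow K n a =1 mlinext (fun m => (mbin a m)%:R *: 'X_[(m - a)%MM]).
Proof. by move=> q; apply: eq_bigr => m _; rewrite scalerA. Qed.

Lemma linear_dpow a : linear (@dpow K n a).
Proof. by move=> c q1 q2; rewrite !dpowE linear_mlinext. Qed.

Lemma dpowX a m : dpow a 'X_[m] = (mbin a m)%:R *: 'X_[(m - a)%MM] :> P.
Proof. by rewrite dpowE mlinextX. Qed.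

Lemma dpow0 q : dpow 0%MM q = q.
Proof.
apply: (eq_linear_op (linear_dpow _) (@linear_op_id K n)) => m.
by rewrite dpowX subm0 /mbin big1 ?scale1r // => i _; rewrite mnm0E bin0.
Qed.

(* Choosing b then a elements of an m-set = choosing a+b of them, then b. *)
Lemma mul_bin_bin (m a b : nat) :
  ('C(m, b) * 'C(m - b, a) = 'C(a + b, b) * 'C(m, a + b))%N.
Proof.
have [le_abm|lt_mab] := leqP (a + b) m; last first.
  rewrite (bin_small lt_mab) muln0.
  have [le_bm|lt_mb] := leqP b m; last by rewrite bin_small.
  by rewrite (@bin_small (m - b)) ?muln0 //; lia.
apply/eqP; rewrite -(@eqn_pmul2r (b`! * a`! * (m - (a + b))`!)); last first.
  by rewrite !muln_gt0 !fact_gt0.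
have e_bm := @bin_fact m b; have e_am := @bin_fact (m - b) a.
have e_abm := @bin_fact m (a + b); have e_ab := bin_fact (leq_addl a b).
rewrite -subnDA addnC in e_am; rewrite addnK in e_ab.
apply/eqP; transitivity ('C(m, b) * (b`! * ('C(m - b, a) * (a`! * (m - (a + b))`!))))%N.
  by ring.
rewrite e_am ?e_bm; [|lia|lia].
transitivity ('C(a + b, b) * (b`! * a`!) * ('C(m, a + b) * (m - (a + b))`!))%N;
  last by ring.
by rewrite e_ab -e_abm //; ring.
Qed.

Lemma dpowM a b q : dpow a (dpow b q) = @mbinom K n a b *: dpow (a + b)%MM q :> P.
Proof.
apply: (eq_linear_op (linear_op_comp (linear_dpow a) (linear_dpow b))
  (linear_op_scale _ (linear_dpow _))) => m.
rewrite !dpowX (linear_opZ (linear_dpow a)) dpowX !scalerA /mbinom -!natrM.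
rewrite submDA addmC; congr (_%:R *: _).
rewrite /mbin -!big_split /=; apply: eq_bigr => i _.
by rewrite mnmBE mnmDE mul_bin_bin.
Qed.

Lemma mbin_addU b (i : 'I_n) m :
  mbin b (U_(i) + m) = (mbin b m + (if (U_(i) <= b)%MM then mbin (b - U_(i)) m else 0))%N.
Proof.
rewrite /mbin (bigD1 i) //= [X in (X + _)%N](bigD1 i) //= lep1mP.
under eq_bigr => j ji do rewrite mnmDE mnm1E eq_sym (negbTE ji) add0n.
rewrite mnmDE mnm1E eqxx; case bi: (b i) => [|k] /=; first by rewrite !bin0 addn0.
rewrite [\prod_(j < n) _](bigD1 i) //= mnmBE mnm1E eqxx bi subn1 add1n binS mulnDl.
congr (_ + _); congr (_ * _); apply: eq_bigr => j ji.
by rewrite mnmBE mnm1E eq_sym (negbTE ji) subn0.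
Qed.

Lemma dpow_commX b (i : 'I_n) q :
  dpow b ('X_i * q) - 'X_i * dpow b q =
  if (U_(i) <= b)%MM then dpow (b - U_(i))%MM q else 0.
Proof.
have lcomm : linear (fun q => dpow b ('X_i * q) - 'X_i * dpow b q).
  exact: linear_op_sub (linear_op_mulr_arg _ (linear_dpow _))
    (linear_op_mull _ (linear_dpow _)).
have commX m : dpow b ('X_i * 'X_[m]) - 'X_i * dpow b 'X_[m] =
    (if (U_(i) <= b)%MM then mbin (b - U_(i)) m else 0%N)%:R
      *: 'X_[(U_(i) + m - b)%MM] :> P.
  rewrite -mpolyXD !dpowX -scalerAr -mpolyXD.
  have [le_bm|nle_bm] := boolP (b <= m)%MM; last first.
    by rewrite (mbin_eq0 nle_bm) scale0r subr0 mbin_addU (mbin_eq0 nle_bm).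
  by rewrite addmBA // -scalerBl -natrB mbin_addU ?leq_addr // addKn.
case: ifP => le_Ub.
  apply: (eq_linear_op lcomm (linear_dpow _)) => m.
  by rewrite commX le_Ub dpowX submBA // addmC.
by apply: (eq_linear_op lcomm (@linear_op_zero K n)) => m; rewrite commX le_Ub scale0r.
Qed.

Lemma iter_mad0 (i : 'I_n) k : iter k (@mad K n i) (fun _ => 0) = (fun _ => 0).
Proof.
elim: k => //= k ->; apply: functional_extensionality => q.
by rewrite /mad mulr0 subr0.
Qed.

Lemma iter_mad_dpow (i : 'I_n) k c :
  iter k (@mad K n i) (dpow c) =
  if (k <= c i)%N then dpow (c - U_(i) *+ k)%MM else (fun _ => 0).
Proof.
elim: k => [|k IH].
  by congr dpow; apply/mnmP => j; rewrite mnmBE mulmnE muln0 subn0.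
rewrite /= IH; case: (leqP k (c i)) => le_kc; last first.
  rewrite ifN -?leqNgt 1?ltnW //.
  by apply: functional_extensionality => q; rewrite /mad mulr0 subr0.
apply: functional_extensionality => q; rewrite /mad dpow_commX lep1mP.
rewrite mnmBE mulmnE mnm1E eqxx mul1n subn_eq0 -ltnNge.
by case: ifP => // _; rewrite submDA -mulmSr.
Qed.

Lemma foldr_iter_mad_dpow a b (s : seq 'I_n) : uniq s ->
  foldr (fun i F => iter (a i) (@mad K n i) F) (dpow b) s =
  if all (fun j => a j <= b j)%N s
  then dpow (b - [multinom (if j \in s then a j else 0%N) | j < n])%MM
  else (fun _ => 0).
Proof.
elim: s => [|j s IH] /=.
  by move=> _; congr dpow; apply/mnmP => j; rewrite mnmBE mnmE subn0.
case/andP => j_notin_s uniq_s; rewrite IH //.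
case: (all _ s); last by rewrite andbF iter_mad0.
rewrite andbT iter_mad_dpow mnmBE mnmE (negbTE j_notin_s) subn0.
case: ifP => // _; congr dpow; apply/mnmP => k.
rewrite !mnmBE !mnmE mulmnE mnm1E in_cons eq_sym.
case: (k =P j) => [->|_] /=; first by rewrite (negbTE j_notin_s) mul1n subn0.
by rewrite mul0n subn0.
Qed.

Lemma mads_dpow a b :
  @mads K n a (dpow b) = if (a <= b)%MM then dpow (b - a)%MM else (fun _ => 0).
Proof.
rewrite /mads foldr_iter_mad_dpow ?enum_uniq //.
have -> : all (fun j => a j <= b j)%N (enum 'I_n) = (a <= b)%MM.
  by apply/allP/mnm_lepP => le_ab j //; apply: le_ab; rewrite mem_enum.
by case: ifP => // _; congr (dpow (_ - _)); apply/mnmP => j; rewrite mnmE mem_enum.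
Qed.

Lemma foldr_iter_madU (i : 'I_n) (T : op K n) (s : seq 'I_n) : uniq s ->
  foldr (fun j F => iter (U_(i)%MM j) (@mad K n j) F) T s =
  if i \in s then mad i T else T.
Proof.
elim: s => [|j s IH] //= /andP [j_notin_s uniq_s]; rewrite IH // in_cons mnm1E.
by case: (i =P j) => [->|_] /=; [rewrite (negbTE j_notin_s) | case: ifP].
Qed.

Lemma madsU (i : 'I_n) (T : op K n) : mads U_(i)%MM T = mad i T.
Proof. by rewrite /mads foldr_iter_madU ?enum_uniq // mem_enum. Qed.

Lemma dpow1 b : b != 0%MM -> dpow b 1 = 0 :> P.
Proof.
move=> b_neq0; rewrite -mpolyX0 dpowX mbin_eq0 ?scale0r //.
apply: contra b_neq0 => /mnm_lepP le_b0; apply/eqP/mnmP => j.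
by have := le_b0 j; rewrite !mnm0E leqn0 => /eqP.
Qed.

Lemma dpow_iterative_descent : iterative_descent (@dpow K n).
Proof.
split=> [a|q|a b q|a b q].
- by exists [:: (a, 1)] => q; rewrite big_seq1 mul1r.
- exact: dpow0.
- exact: dpowM.
- by rewrite mads_dpow; case: ifP.
Qed.

Lemma linear_diffop (T : op K n) : is_diffop T -> linear T.
Proof.
case=> s eT c q1 q2; rewrite !eT scaler_sumr -big_split /=.
by apply: eq_bigr => x _; rewrite linear_dpow mulrDr scalerAr.
Qed.

Lemma msize_dpow b q : b != 0%MM -> (msize (dpow b q) <= (msize q).-1)%N.
Proof.
move=> b_neq0; apply: leq_trans (msize_sum _ _ _) _.
apply/bigmax_leqP_seq => m m_supp _; rewrite -/(mbin b m).
have [le_bm|nle_bm] := boolP (b <= m)%MM; last first.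
  by rewrite mbin_eq0 // mulr0 scale0r msize0.
rewrite (leq_trans (msizeZ_le _ _)) // msizeX.
have := msize_mdeg_lt m_supp; rewrite -{1}(submK le_bm) mdegD.
have : (0 < mdeg b)%N by rewrite lt0n mdeg_eq0.
lia.
Qed.

(* Since d^[b] lowers degrees, the degree of f^k dominates the iterates. *)
Lemma iter_dpow_addmul_lead b f k : b != 0%MM -> f != 0 ->
  (msize (iter k (fun q => dpow b q + q * f) 1 - f ^+ k)%R < msize (f ^+ k))%N.
Proof.
move=> b_neq0 f_neq0; have fk_neq0 j : f ^+ j != 0 by rewrite expf_neq0.
have sf_gt0 : (0 < msize f)%N by rewrite lt0n msize_poly_eq0.
elim: k => [|k]; first by rewrite expr0 subrr msize0 msize1.
set r := _ - f ^+ k => IH.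
have -> : iter k.+1 (fun q => dpow b q + q * f) 1 - f ^+ k.+1 =
    dpow b (f ^+ k + r) + r * f by rewrite /r iterS /= [f ^+ k + _]addrC subrK exprSr; ring.
have sfk_gt0 : (0 < msize (f ^+ k))%N by rewrite lt0n msize_poly_eq0.
clearbody r.
rewrite exprSr msizeM //; apply: leq_ltn_trans (msizeD_le _ _) _.
have := msize_dpow (f ^+ k + r) b_neq0; have := msizeD_le (f ^+ k) r.
(* The [set]s identify copies of [msize] built from different but convertible
   ring instances, which [lia] would otherwise treat as distinct atoms. *)
move: IH sfk_gt0 sf_gt0; set A := msize (f ^+ k); set F := msize f.
have [->|r_neq0] := eqVneq r 0.
  rewrite mul0r !msize0; set D := msize (dpow b _); set S := msize (_ + 0); lia.
rewrite msizeM //; set R := msize r; set D := msize (dpow b _); set S := msize (_ + r).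
rewrite -/F; lia.
Qed.

Lemma iter_dpow_addmul_neq0 b f k : b != 0%MM -> f != 0 ->
  iter k (fun q => dpow b q + q * f) 1 != 0.
Proof.
move=> b_neq0 f_neq0; have := iter_dpow_addmul_lead k b_neq0 f_neq0.
by apply: contraTneq => ->; rewrite sub0r msizeN ltnn.
Qed.

End DividedPowers.

Section Uniqueness.
Variables (K : fieldType) (n : nat) (y : 'X_{1..n} -> op K n).
Hypotheses (y_diffop : forall a, is_diffop (y a)) (y0 : forall q, y 0%MM q = q)
  (yM : forall a b q, opmul (y a) (y b) q = @mbinom K n a b *: y (a + b)%MM q)
  (y_mads : forall a b q, mads a (y b) q = if (a <= b)%MM then y (b - a)%MM q else 0).

Let linear_y a : linear (y a) := linear_diffop (y_diffop a).

Lemma descent_eq_dpow_addmul b : (forall c, (mdeg c < mdeg b)%N -> y c =1 dpow c) ->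
  b != 0%MM -> forall q, y b q = dpow b q + q * y b 1.
Proof.
move=> IH b_neq0; pose z q := y b q - dpow b q.
have lz : linear z := linear_op_sub (linear_y b) (linear_dpow b).
have zX i q : z ('X_i * q) = 'X_i * z q.
  have : y b ('X_i * q) - 'X_i * y b q = dpow b ('X_i * q) - 'X_i * dpow b q.
    rewrite -[LHS]/(mad i (y b) q) -madsU y_mads dpow_commX.
    case: ifP => // le_Ub; apply: IH.
    by rewrite -[in X in (_ < X)%N](submK le_Ub) mdegD mdeg1 addn1.
  by move/eqP; rewrite subr_eq => /eqP e; rewrite /z mulrBr e; ring.
move=> q; have := linear_op_commX_mulr lz zX q.
by rewrite /z dpow1 // subr0 => /eqP; rewrite subr_eq addrC => /eqP.
Qed.

Lemma descent_iter b k : exists c : K, forall q, iter k.+1 (y b) q = c *: y (b *+ k.+1)%MM q.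
Proof.
elim: k => [|k [c IH]]; first by exists 1 => q; rewrite scale1r.
exists (c * @mbinom K n b (b *+ k.+1)%MM) => q.
rewrite iterS IH (linear_opZ (linear_y b)) -[y b _]/(opmul (y b) (y _) q) yM.
by rewrite scalerA -mulmS.
Qed.

(* binom(p m, m) = p binom(p m - 1, m - 1) for m > 0. *)
Lemma mbinom_mulmn_pred p b : p \in [pchar K] -> b != 0%MM ->
  @mbinom K n b (b *+ p.-1)%MM = 0.
Proof.
move=> pK /mnm_neq0_exists [i bi_neq0]; have p_gt1 := prime_gt1 (pcharf_prime pK).
suff /dvdnP [k e] : (p %| \prod_(j < n) 'C((b + b *+ p.-1)%MM j, (b *+ p.-1)%MM j))%N.
  by rewrite /mbinom e natrM (pcharf0 pK) mulr0.
rewrite (bigD1 i) //= dvdn_mulr // mnmDE !mulmnE.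
have bi_gt0 : (0 < b i)%N by rewrite lt0n.
have -> : (b i + b i * p.-1 = b i * p)%N by rewrite -mulnS prednK // ltnW.
have -> : (b i * p.-1 = b i * p - b i)%N by rewrite -subn1 mulnBr muln1.
rewrite bin_sub ?leq_pmulr 1?ltnW //.
have := mul_bin_diag (b i * p) (b i).-1.
rewrite prednK // => e; apply/dvdnP; exists 'C((b i * p).-1, (b i).-1).
by apply/eqP; rewrite -(@eqn_pmul2l (b i)) // -e; apply/eqP; ring.
Qed.

Lemma descent_nilpotent p b : p \in [pchar K] -> b != 0%MM -> forall q, iter p (y b) q = 0.
Proof.
move=> pK b_neq0 q; have p_gt1 := prime_gt1 (pcharf_prime pK).
have [c IH] := descent_iter b p.-2.
have -> : p = p.-2.+2 by lia.
rewrite iterS IH (linear_opZ (linear_y b)) -[y b _]/(opmul (y b) (y _) q) yM.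
have -> : p.-2.+1 = p.-1 by lia.
by rewrite mbinom_mulmn_pred // scale0r scaler0.
Qed.

Lemma descent_eq_dpow p b : p \in [pchar K] -> y b =1 dpow b.
Proof.
move=> pK; have [k] := ubnP (mdeg b); elim: k b => // k IH b lt_bk.
have [->|b_neq0] := eqVneq b 0%MM; first by move=> q; rewrite y0 dpow0.
have yb := descent_eq_dpow_addmul (fun c lt_cb => IH c (leq_trans lt_cb lt_bk)) b_neq0.
suff yb1 : y b 1 = 0 by move=> q; rewrite yb yb1 mulr0 addr0.
apply/eqP; apply: contraT => f_neq0.
have := iter_dpow_addmul_neq0 p b_neq0 f_neq0.
by rewrite -(eq_iter yb) (descent_nilpotent pK b_neq0) eqxx.
Qed.

End Uniqueness.

Unset Implicit Arguments. Set Strict Implicit.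

Theorem theorem3p1 (K : fieldType) (p : nat) (hp : p \in [pchar K]) (n : nat) :
  iterative_descent (@dpow K n) /\
  (forall y : 'X_{1..n} -> op K n,
     iterative_descent y -> forall a q, y a q = dpow a q).
Proof.
split; first exact: dpow_iterative_descent.
by move=> y [y_diffop y0 yM y_mads] a; apply: descent_eq_dpow hp.
Qed.
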